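(* Let $\pi>0$, let $0<\theta_1<\dots<\theta_K$ and $0\le\beta_1<\dots<\beta_M\le1$, and let $A:[0,D]\to[0,\infty)$ be differentiable with $A'(Q)<0$ on $[0,D]$. For $Q\in[0,D]$ define $\sigma(Q,\beta,\theta)=-[\theta\beta+\pi(1-\beta)]A'(Q)$. Let $\Lambda_1$ denote a user type $(\beta_m,\theta_k)$ with the smallest value of $\sigma(Q,\cdot)$ and $\Lambda_{KM}$ a user type with the largest value of $\sigma(Q,\cdot)$ among the $KM$ types. Then: (i) if $\theta_1<\theta_K<\pi$, one may take $\Lambda_1=(\beta_M,\theta_1)$ and $\Lambda_{KM}=(\beta_1,\theta_K)$; (ii) if $\theta_1<\pi<\theta_K$, one may take $\Lambda_1=(\beta_M,\theta_1)$ and $\Lambda_{KM}=(\beta_M,\theta_K)$; (iii) if $\pi<\theta_1<\theta_K$, one may take $\Lambda_1=(\beta_1,\theta_1)$ and $\Lambda_{KM}=(\beta_M,\theta_K)$. (That is, in each case the stated type minimizes, resp. maximizes, $\sigma(Q,\cdot)$ over all $KM$ types, for every $Q$.)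
   Context: Model: $\pi$ is the overage price per unit of data beyond the cap; $A(Q)$ is a subscriber's expected overage consumption under data cap $Q$ (decreasing and convex). A user type $(\beta,\theta)$ consists of a data valuation $\theta$ and a network substitutability $\beta$; $\sigma$ is the user's willingness-to-pay (slope of his indifference curve in the cap/fee plane). Types are sorted as $\Lambda_1,\dots,\Lambda_{KM}$ in ascending order of $\sigma$; this ordering does not depend on $Q$. *)

From Stdlib Require Import Reals.
Open Scope R_scope.

(* Willingness-to-pay of a user of type (beta, theta) at data cap Q, where
   dA is the derivative A' of the expected overage consumption A. *)
Definition sigma (pi : R) (dA : R -> R) (Q beta theta : R) : R :=
  - (theta * beta + pi * (1 - beta)) * dA Q.

Definition is_min_type (pi : R) (dA : R -> R) (K M : nat)
  (beta theta : nat -> R) (Q b t : R) : Prop :=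
  forall k m, (1 <= k <= K)%nat -> (1 <= m <= M)%nat ->
    sigma pi dA Q b t <= sigma pi dA Q (beta m) (theta k).

Definition is_max_type (pi : R) (dA : R -> R) (K M : nat)
  (beta theta : nat -> R) (Q b t : R) : Prop :=
  forall k m, (1 <= k <= K)%nat -> (1 <= m <= M)%nat ->
    sigma pi dA Q (beta m) (theta k) <= sigma pi dA Q b t.

From Pilot Require Import Defs.
From Stdlib Require Import Reals Lra Lia.
Open Scope R_scope.

(* Since A' < 0, sigma orders the types as the valuation
   w(beta, theta) = pi + beta (theta - pi) does.  For beta >= 0, w increases
   with theta, so the extremal types have theta_1 resp. theta_K; along
   beta, w has slope theta - pi, so the extremal beta is beta_1 or beta_M
   according to the sign of theta_1 - pi resp. theta_K - pi. *)

Lemma increasing_bounds (f : nat -> R) (n : nat) :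
  (forall i j, (1 <= i)%nat -> (i < j)%nat -> (j <= n)%nat -> f i < f j) ->
  forall i, (1 <= i <= n)%nat -> f 1%nat <= f i <= f n.
Proof.
  intros f_incr i [i_ge1 i_le_n]; split.
  - destruct (Nat.eq_dec i 1) as [->|i_ne1]; [lra|].
    left; apply f_incr; lia.
  - destruct (Nat.eq_dec i n) as [->|i_ne_n]; [lra|].
    left; apply f_incr; lia.
Qed.

(* Qualified because [Reals] exports its own [sigma] (finite sums). *)
Lemma sigma_le (pi : R) (dA : R -> R) (Q b t b' t' : R) :
  dA Q < 0 ->
  t * b + pi * (1 - b) <= t' * b' + pi * (1 - b') ->
  Defs.sigma pi dA Q b t <= Defs.sigma pi dA Q b' t'.
Proof.
  intros dA_neg w_le; unfold Defs.sigma.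
  rewrite <- !Ropp_mult_distr_l, !Ropp_mult_distr_r.
  apply Rmult_le_compat_r; lra.
Qed.

Section ExtremalTypes.

Variables (pi : R) (dA : R -> R) (K M : nat) (beta theta : nat -> R) (Q : R).

Hypothesis dA_neg : dA Q < 0.
Hypothesis beta1_ge0 : 0 <= beta 1%nat.
Hypothesis beta_range :
  forall m, (1 <= m <= M)%nat -> beta 1%nat <= beta m <= beta M.
Hypothesis theta_range :
  forall k, (1 <= k <= K)%nat -> theta 1%nat <= theta k <= theta K.

Lemma min_type_theta1_le_pi :
  theta 1%nat <= pi -> is_min_type pi dA K M beta theta Q (beta M) (theta 1%nat).
Proof.
  intros theta1_le k m Hk Hm; apply sigma_le; [exact dA_neg|].
  destruct (beta_range m Hm), (theta_range k Hk).
  assert (0 <= beta m * (theta k - theta 1%nat)) by (apply Rmult_le_pos; lra).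
  assert (0 <= (beta M - beta m) * (pi - theta 1%nat)) by (apply Rmult_le_pos; lra).
  lra.
Qed.

Lemma min_type_pi_le_theta1 :
  pi <= theta 1%nat -> is_min_type pi dA K M beta theta Q (beta 1%nat) (theta 1%nat).
Proof.
  intros theta1_ge k m Hk Hm; apply sigma_le; [exact dA_neg|].
  destruct (beta_range m Hm), (theta_range k Hk).
  assert (0 <= beta m * (theta k - theta 1%nat)) by (apply Rmult_le_pos; lra).
  assert (0 <= (beta m - beta 1%nat) * (theta 1%nat - pi)) by (apply Rmult_le_pos; lra).
  lra.
Qed.

Lemma max_type_thetaK_le_pi :
  theta K <= pi -> is_max_type pi dA K M beta theta Q (beta 1%nat) (theta K).
Proof.
  intros thetaK_le k m Hk Hm; apply sigma_le; [exact dA_neg|].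
  destruct (beta_range m Hm), (theta_range k Hk).
  assert (0 <= beta m * (theta K - theta k)) by (apply Rmult_le_pos; lra).
  assert (0 <= (beta m - beta 1%nat) * (pi - theta K)) by (apply Rmult_le_pos; lra).
  lra.
Qed.

Lemma max_type_pi_le_thetaK :
  pi <= theta K -> is_max_type pi dA K M beta theta Q (beta M) (theta K).
Proof.
  intros thetaK_ge k m Hk Hm; apply sigma_le; [exact dA_neg|].
  destruct (beta_range m Hm), (theta_range k Hk).
  assert (0 <= beta m * (theta K - theta k)) by (apply Rmult_le_pos; lra).
  assert (0 <= (beta M - beta m) * (theta K - pi)) by (apply Rmult_le_pos; lra).
  lra.
Qed.

End ExtremalTypes.

Theorem proposition2
  (pi D : R) (K M : nat) (theta beta : nat -> R) (A dA : R -> R)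
  (Hpi : 0 < pi)
  (HK : (1 <= K)%nat) (HM : (1 <= M)%nat)
  (Htheta0 : 0 < theta 1%nat)
  (Htheta : forall i j, (1 <= i)%nat -> (i < j)%nat -> (j <= K)%nat -> theta i < theta j)
  (Hbeta0 : 0 <= beta 1%nat) (Hbeta1 : beta M <= 1)
  (Hbeta : forall i j, (1 <= i)%nat -> (i < j)%nat -> (j <= M)%nat -> beta i < beta j)
  (HA0 : forall Q, 0 <= Q <= D -> 0 <= A Q)
  (HdA : forall Q, 0 <= Q <= D -> derivable_pt_lim A Q (dA Q))
  (HdAneg : forall Q, 0 <= Q <= D -> dA Q < 0) :
  (theta 1%nat < theta K < pi ->
     forall Q, 0 <= Q <= D ->
       is_min_type pi dA K M beta theta Q (beta M) (theta 1%nat) /\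
       is_max_type pi dA K M beta theta Q (beta 1%nat) (theta K)) /\
  (theta 1%nat < pi < theta K ->
     forall Q, 0 <= Q <= D ->
       is_min_type pi dA K M beta theta Q (beta M) (theta 1%nat) /\
       is_max_type pi dA K M beta theta Q (beta M) (theta K)) /\
  (pi < theta 1%nat < theta K ->
     forall Q, 0 <= Q <= D ->
       is_min_type pi dA K M beta theta Q (beta 1%nat) (theta 1%nat) /\
       is_max_type pi dA K M beta theta Q (beta M) (theta K)).
Proof.
  pose proof (increasing_bounds theta K Htheta) as theta_range.
  pose proof (increasing_bounds beta M Hbeta) as beta_range.
  split; [|split]; intros [] Q HQ; pose proof (HdAneg Q HQ); split.
  - apply min_type_theta1_le_pi; auto; lra.
  - apply max_type_thetaK_le_pi; auto; lra.
  - apply min_type_theta1_le_pi; auto; lra.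
  - apply max_type_pi_le_thetaK; auto; lra.
  - apply min_type_pi_le_theta1; auto; lra.
  - apply max_type_pi_le_thetaK; auto; lra.
Qed.
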